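(* Let $r\ge2$ and let $P,Q$ be a harmonious pair of $r$-patterns. Then for every $k\ge1$, the number of $\{P,Q\}$-cliques among the ordered $r$-matchings on $[rk]$ equals $k!$.
   Context: An ordered $r$-matching of size $k$ is a set of $k$ pairwise disjoint $r$-element subsets (edges) of $[rk]$ (with its natural order). An $r$-pattern is an ordered $r$-matching of size 2, written as a word over $\{A,B\}$ (each letter $r$ times, starting with $A$). Two edges form pattern $P$ if they induce a matching order-isomorphic to $P$; a $\mathcal P$-clique is an ordered matching all of whose pairs of edges form patterns in $\mathcal P$. An $r$-pattern is collectable if it splits into consecutive blocks $S_1\cdots S_s$ each of the form $A^tB^t$ or $B^tA^t$ ($t\ge1$; $W^t$ is $t$ repetitions of $W$); this splitting is unique and its composition is $(|S_1|/2,\dots,|S_s|/2)$. Two distinct collectable $r$-patterns are harmonious if they have the same composition. *)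

From mathcomp Require Import all_boot.
Set Implicit Arguments. Unset Strict Implicit. Unset Printing Implicit Defensive.

(* Words over {A,B}: A = true, B = false. *)

Definition is_pattern (r : nat) (w : seq bool) : bool :=
  [&& size w == 2 * r, count id w == r & head false w].

Definition is_block (b : seq bool) : Prop :=
  exists2 t, 1 <= t & (b = nseq t true ++ nseq t false \/ b = nseq t false ++ nseq t true).

Definition is_splitting (w : seq bool) (bs : seq (seq bool)) : Prop :=
  (forall b, b \in bs -> is_block b) /\ flatten bs = w.

Definition collectable (w : seq bool) : Prop := exists bs, is_splitting w bs.

Definition composition_of (bs : seq (seq bool)) : seq nat :=
  [seq (size b)./2 | b <- bs].

(* Two distinct collectable patterns with the same composition
   (the splitting is unique, so comparing some splittings is the same
   as comparing "the" compositions). *)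
Definition harmonious (P Q : seq bool) : Prop :=
  P <> Q /\
  exists bsP bsQ, [/\ is_splitting P bsP, is_splitting Q bsQ &
                     composition_of bsP = composition_of bsQ].

(* The word induced by two edges e, f of an ordered matching on 'I_n:
   list the elements of e ∪ f in increasing order, and write A for those
   belonging to the edge containing the minimum of e ∪ f, B for the others. *)
Definition pattern_of (n : nat) (e f : {set 'I_n}) : seq bool :=
  let s := sort leq [seq val x | x <- enum (e :|: f)] in
  let E := if head 0 s \in [seq val y | y <- enum e] then e else f in
  [seq (x \in [seq val y | y <- enum E]) | x <- s].

(* Ordered r-matching of size k: k pairwise disjoint r-element subsets of [rk]
   (here [rk] is represented by 'I_(r*k) with its natural order). *)
Definition is_matching (r k : nat) (M : {set {set 'I_(r * k)}}) : bool :=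
  [&& [forall e in M, #|e| == r],
      [forall e in M, forall f in M, (e != f) ==> [disjoint e & f]]
    & #|M| == k].

Definition is_clique2 (n : nat) (P Q : seq bool) (M : {set {set 'I_n}}) : bool :=
  [forall e in M, forall f in M, (e != f) ==> (pattern_of e f \in [:: P; Q])].

From mathcomp Require Import all_boot zify fingroup perm.
Set Implicit Arguments. Unset Strict Implicit. Unset Printing Implicit Defensive.

(* Harmonious P and Q are both made of blocks of sizes t_1, ..., t_s, each block
   being A^t B^t or B^t A^t; both start with A and they orient some block d
   differently.  In a {P,Q}-clique with k edges, let the rank of an edge e in block i
   be the number of edges whose i-th block starts before that of e.  Counting the
   points below each point of e edge by edge shows that block i of e consists of t_i
   consecutive points starting at k (t_1 + ... + t_(i-1)) + t_i rank_i(e), so e is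
   determined by its ranks.  As every pair of edges forms P or Q, all ranks of e are
   determined by rank_1(e) and rank_d(e); both are bijections from the clique onto
   {0, ..., k-1}, so the clique is encoded by a permutation.  Conversely, placing
   the edges as above according to any permutation yields a clique, whence k!. *)

(** * Block words *)

(* (lags w)_j is the number of B's before the j-th A of w. *)
Fixpoint lags (w : seq bool) : seq nat :=
  if w is b :: w' then (if b then 0 :: lags w' else map succn (lags w')) else [::].

Lemma size_lags w : size (lags w) = count id w.
Proof. by elim: w => //= [[]] w IH /=; rewrite ?size_map IH. Qed.

Lemma lags_inj w1 w2 :
  lags w1 = lags w2 -> count negb w1 = count negb w2 -> w1 = w2.
Proof.
elim: w1 w2 => [|[] w1 IH] [|[] w2] //=; try by case: (lags _).
- by case=> /IH eq_w /eq_w ->.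
- by case: (lags w2).
- by move=> /(inj_map succn_inj) /IH eq_w /addnI /eq_w ->.
Qed.

Lemma lags_cat u v : lags (u ++ v) = lags u ++ map (addn (count negb u)) (lags v).
Proof.
elim: u => [|[] u IH] /=; first by rewrite map_id_in.
  by rewrite IH.
by rewrite IH map_cat -map_comp; congr (_ ++ _); apply: eq_map => x /=; rewrite addSn.
Qed.

Lemma lags_nseq t b : lags (nseq t b) = nseq (b * t) 0.
Proof. by case: b; elim: t => //= t ->. Qed.

Definition block (t : nat) (o : bool) : seq bool :=
  if o then nseq t true ++ nseq t false else nseq t false ++ nseq t true.

Fixpoint block_word (ts : seq nat) (os : seq bool) : seq bool :=
  if (ts, os) is (t :: ts', o :: os') then block t o ++ block_word ts' os' else [::].

Lemma lags_block t o : lags (block t o) = nseq t (~~ o * t).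
Proof.
case: o; rewrite /block lags_cat !lags_nseq /= ?mul1n ?mul0n ?cats0 //.
by rewrite count_nseq mul1n map_nseq addn0.
Qed.

Lemma count_block (a : pred bool) t o : count a (block t o) = (a true + a false) * t.
Proof. by case: o; rewrite /block count_cat !count_nseq; lia. Qed.

Lemma count_block_word (a : pred bool) ts os : size ts = size os ->
  count a (block_word ts os) = (a true + a false) * sumn ts.
Proof.
elim: ts os => [|t ts IH] [|o os] //=; rewrite ?muln0 // => -[/IH eq_count].
by rewrite count_cat count_block eq_count mulnDr.
Qed.

Lemma map_negb_block_word ts os :
  map negb (block_word ts os) = block_word ts (map negb os).
Proof.
elim: ts os => [|t ts IH] [|o os] //=.
by rewrite map_cat IH; case: o; rewrite /block /= map_cat !map_nseq.
Qed.

Definition psum (ts : seq nat) (i : nat) : nat := sumn (take i ts).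

Fixpoint block_of (ts : seq nat) (j : nat) : nat :=
  if ts is t :: ts' then (if j < t then 0 else (block_of ts' (j - t)).+1) else 0.

Lemma psum0 ts : psum ts 0 = 0. Proof. by case: ts. Qed.

Lemma psumS ts i : i < size ts -> psum ts i.+1 = psum ts i + nth 0 ts i.
Proof.
rewrite /psum; elim: ts i => [|t ts IH] [|i] //=; first by rewrite take0 /=; lia.
by move=> /IH ->; lia.
Qed.

Lemma leq_psum ts i i' : i <= i' -> psum ts i <= psum ts i'.
Proof.
rewrite /psum; elim: ts i i' => [|t ts IH] [|i] [|i'] //=.
by rewrite ltnS leq_add2l => /IH.
Qed.

Lemma psum_le_sumn ts i : psum ts i <= sumn ts.
Proof. by rewrite /psum -{2}(cat_take_drop i ts) sumn_cat leq_addr. Qed.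

Lemma block_of_psumD ts i u :
  i < size ts -> u < nth 0 ts i -> block_of ts (psum ts i + u) = i.
Proof.
rewrite /psum; elim: ts i => [|t ts IH] [|i] //=; first by rewrite add0n => _ ->.
move=> /IH lt_i /lt_i {}IH; rewrite ltnNge -addnA leq_addr /=.
by rewrite addKn IH.
Qed.

Lemma block_of_lt_size ts j : j < sumn ts -> block_of ts j < size ts.
Proof.
elim: ts j => [|t ts IH] j //=; case: ifP => // /negbT; rewrite -leqNgt => le_tj lt_j.
by rewrite ltnS IH //; lia.
Qed.

Lemma psum_block_of_le ts j : psum ts (block_of ts j) <= j.
Proof.
rewrite /psum; elim: ts j => [|t ts IH] j //=.
by case: ifP => [//|/negbT] /=; have := IH (j - t); lia.
Qed.

Lemma lt_psum_block_ofS ts j : j < sumn ts -> j < psum ts (block_of ts j).+1.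
Proof.
rewrite /psum; elim: ts j => [|t ts IH] j //=.
case: ifP => [lt_jt _|/negbT]; first by rewrite take0 /=; lia.
by rewrite -leqNgt => le_tj lt_j; have := IH (j - t); lia.
Qed.

Lemma block_of_ltE ts j i :
  j < sumn ts -> i <= size ts -> (block_of ts j < i) = (j < psum ts i).
Proof.
move=> lt_j le_i; apply/idP/idP => [lt_bi|lt_jp].
  exact: leq_trans (lt_psum_block_ofS lt_j) (leq_psum _ _).
rewrite ltnNge; apply/negP => /(leq_psum ts); have := psum_block_of_le ts j; lia.
Qed.

Lemma nth_lags_block_word ts os j : size ts = size os -> j < sumn ts ->
  let i := block_of ts j in
  nth 0 (lags (block_word ts os)) j = psum ts i + ~~ nth true os i * nth 0 ts i.
Proof.
rewrite /psum; elim: ts os j => [|t ts IH] [|o os] j //= [size_os] lt_j.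
rewrite lags_cat lags_block nth_cat size_nseq count_block /= mul1n.
case: ifP => lt_jt; first by rewrite nth_nseq lt_jt take0.
have le_tj : t <= j by rewrite leqNgt lt_jt.
rewrite (nth_map 0); last by rewrite size_lags count_block_word //=; lia.
by rewrite IH /= 1?addnA //; lia.
Qed.

Section SortedNat.
Variable s : seq nat.
Hypothesis s_sorted : sorted ltn s.

Lemma lags_map_sorted (E : pred nat) :
  lags (map E s) = [seq count (fun b => ~~ E b && (b < a)) s | a <- filter E s].
Proof.
elim: s s_sorted => [|x s' IH] //= s_path.
have x_min : {in s', forall a, x < a} by apply/allP; exact: order_path_min ltn_trans s_path.
rewrite IH ?(path_sorted s_path) //; case: (boolP (E x)) => Ex /=.
  congr (_ :: _); apply/esym/eqP; rewrite -leqn0 leqNgt -has_count.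
  by apply/hasP => -[b /x_min]; lia.
rewrite -map_comp; apply/eq_in_map => a; rewrite mem_filter => /andP[_ /x_min] /= ->.
by [].
Qed.

Lemma count_lt_nth p : p < size s -> count (fun x => x < nth 0 s p) s = p.
Proof.
elim: s s_sorted p => [|x s' IH] //= s_path [|p] /= lt_p;
  have x_min : {in s', forall a, x < a}
    by apply/allP; exact: order_path_min ltn_trans s_path.
- rewrite ltnn add0n; apply/eqP; rewrite eqn0Ngt -has_count.
  by apply/hasP => -[b /x_min]; lia.
- by rewrite x_min ?mem_nth // IH ?(path_sorted s_path).
Qed.

Lemma nth_lt_count p a : p < size s -> (nth 0 s p < a) = (p < count (fun x => x < a) s).
Proof.
elim: s s_sorted p => [|x s' IH] //= s_path [|p] /= lt_p;
  have x_min : {in s', forall b, x < b}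
    by apply/allP; exact: order_path_min ltn_trans s_path.
- case: ltnP => //= lt_xa; rewrite add0n.
  suff -> : count (fun y => y < a) s' = 0 by [].
  by apply/eqP; rewrite eqn0Ngt -has_count; apply/hasP => -[b /x_min]; lia.
- have IHp := IH (path_sorted s_path) p lt_p; have := x_min _ (mem_nth 0 lt_p).
  case: (ltnP x a) => [_ _|le_ax lt_xn]; first by rewrite add1n ltnS IHp.
  have /negbTE lt_na : ~~ (nth 0 s' p < a).
    by rewrite -leqNgt; exact: leq_trans le_ax (ltnW lt_xn).
  move: IHp; rewrite lt_na add0n => /esym/negbT; rewrite -!leqNgt => le_cp.
  by apply/esym/negbTE; rewrite -leqNgt ltnW.
Qed.

End SortedNat.

Lemma count_lt_iota m N : m <= N -> count (fun x => x < m) (iota 0 N) = m.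
Proof.
move=> le_mN; rewrite -(subnKC le_mN) iotaD count_cat add0n.
rewrite (eq_in_count (a2 := predT)) => [|x]; last by rewrite mem_iota.
rewrite count_predT size_iota (eq_in_count (a2 := pred0)) ?count_pred0 ?addn0 //.
by move=> x; rewrite mem_iota /=; lia.
Qed.

Lemma ltn_muladd t a b u v : u < t -> v < t -> a != b ->
  (t * a + u < t * b + v) = (a < b).
Proof.
move=> lt_ut lt_vt neq_ab; case: (ltngtP a b) => [lt_ab|lt_ba|eq_ab].
- have : t * a.+1 <= t * b by rewrite leq_mul2l lt_ab orbT.
  by rewrite mulnS; lia.
- have : t * b.+1 <= t * a by rewrite leq_mul2l lt_ba orbT.
  by rewrite mulnS; lia.
- by rewrite eq_ab eqxx in neq_ab.
Qed.

(** * Sets of points as sorted sequences *)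

Section OrdinalSets.
Variable n : nat.
Implicit Types (e f E : {set 'I_n}).

Definition vals E : seq nat := [seq val x | x <- enum E].
Definition svals E : seq nat := sort leq (vals E).
Definition elt E j : nat := nth 0 (svals E) j.
Definition count_below E a : nat := \sum_(x in E) (val x < a).

Lemma mem_vals E x : (val x \in vals E) = (x \in E).
Proof. by rewrite (mem_map val_inj) mem_enum. Qed.

Lemma mem_svals E a : (a \in svals E) = (a \in vals E).
Proof. by rewrite mem_sort. Qed.

Lemma svals_sorted E : sorted ltn (svals E).
Proof.
rewrite ltn_sorted_uniq_leq sort_uniq (map_inj_uniq val_inj) enum_uniq /=.
exact: (sort_sorted leq_total).
Qed.

Lemma size_svals E : size (svals E) = #|E|.
Proof. by rewrite size_sort size_map cardE. Qed.

Lemma svals_inj : injective svals.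
Proof. by move=> e f eq_ef; apply/setP => x; rewrite -!mem_vals -!mem_svals eq_ef. Qed.

Lemma count_svals (a : pred nat) E : count a (svals E) = \sum_(x in E) a (val x).
Proof.
rewrite count_sort count_map -sum1_count big_enum_cond /= big_mkcond /=.
by rewrite [RHS]big_mkcond; apply: eq_bigr => x _; case: (x \in E); case: (a (val x)).
Qed.

Lemma count_belowE E a : count_below E a = count (fun x => x < a) (svals E).
Proof. by rewrite count_svals. Qed.

Lemma count_below_setT a : a <= n -> count_below [set: 'I_n] a = a.
Proof.
move=> le_an; rewrite /count_below (eq_bigl predT) => [|x]; last by rewrite inE.
transitivity (\sum_(0 <= i < n) (i < a)); first by rewrite big_mkord.
rewrite (big_cat_nat _ (n := a)) //= (eq_big_nat _ _ (F2 := fun=> 1)).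
  rewrite [X in _ + X](eq_big_nat _ _ (F2 := fun=> 0)) => [|i /andP[le_ai _]].
    by rewrite sum_nat_const_nat big1_eq muln1 subn0 addn0.
  by rewrite ltnNge le_ai.
by move=> i /andP[_ ->].
Qed.

Lemma elt_mem E j : j < #|E| -> exists2 x, x \in E & val x = elt E j.
Proof.
move=> lt_j; have : elt E j \in svals E by apply: mem_nth; rewrite size_svals.
by rewrite mem_svals => /mapP [x]; rewrite mem_enum => xE ->; exists x.
Qed.

Lemma elt_lt_n E j : j < #|E| -> elt E j < n.
Proof. by move=> /elt_mem [x _ <-]; exact: ltn_ord. Qed.

Lemma count_below_elt E j : j < #|E| -> count_below E (elt E j) = j.
Proof. by move=> lt_j; rewrite count_belowE count_lt_nth ?size_svals ?svals_sorted. Qed.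

Lemma elt_ltE E j a : j < #|E| -> (elt E j < a) = (j < count_below E a).
Proof. by move=> lt_j; rewrite count_belowE nth_lt_count ?size_svals ?svals_sorted. Qed.

Definition indicator e f : seq bool := [seq a \in vals e | a <- svals (e :|: f)].

Lemma pattern_ofE e f : pattern_of e f =
  if head 0 (svals (e :|: f)) \in vals e then indicator e f else indicator f e.
Proof. by rewrite /pattern_of -/(svals _) /indicator; case: ifP; rewrite // setUC. Qed.

Section Disjoint.
Variables e f : {set 'I_n}.
Hypothesis ef_disj : [disjoint e & f].

Lemma indicator_sym : indicator f e = map negb (indicator e f).
Proof.
rewrite /indicator setUC -map_comp; apply/eq_in_map => a.
rewrite mem_svals => /mapP [x]; rewrite mem_enum in_setU => xef -> /=.
by rewrite !mem_vals; case/orP: xef => [xe|xf];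
  rewrite ?xe ?xf ?(disjointFr ef_disj xe) ?(disjointFl ef_disj xf).
Qed.

Lemma count_negb_indicator : count negb (indicator e f) = #|f|.
Proof.
rewrite count_map count_svals -sum1_card big_mkcond [RHS]big_mkcond /=.
apply: eq_bigr => x _; rewrite mem_vals in_setU.
by case: (boolP (x \in e)) => [/(disjointFr ef_disj) ->|_] //=; case: (x \in f).
Qed.

Lemma count_indicator : count id (indicator e f) = #|e|.
Proof.
rewrite count_map count_svals -sum1_card big_mkcond [RHS]big_mkcond /=.
by apply: eq_bigr => x _; rewrite /= mem_vals in_setU; case: (x \in e); case: (x \in f).
Qed.

Lemma lags_indicator : lags (indicator e f) = [seq count_below f a | a <- svals e].
Proof.
rewrite lags_map_sorted ?svals_sorted //.
have -> : [seq a <- svals (e :|: f) | a \in vals e] = svals e.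
  apply: (irr_sorted_eq ltn_trans ltnn); rewrite ?svals_sorted //.
    exact/sorted_filter/svals_sorted/ltn_trans.
  move=> a; rewrite mem_filter !mem_svals andb_idr // => /mapP [x].
  by rewrite mem_enum => xe ->; rewrite mem_vals in_setU xe.
apply: eq_map => a; rewrite count_svals big_mkcond [RHS]big_mkcond /=.
apply: eq_bigr => x _; rewrite mem_vals in_setU.
by case: (boolP (x \in e)) => [/(disjointFr ef_disj) ->|_] //=; case: (x \in f).
Qed.

Lemma indicator_block_wordP ts os :
  size ts = size os -> #|e| = sumn ts -> #|f| = sumn ts ->
  indicator e f = block_word ts os <->
  (forall j, j < sumn ts -> let i := block_of ts j in
     count_below f (elt e j) = psum ts i + ~~ nth true os i * nth 0 ts i).
Proof.
move=> size_os card_e card_f.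
have nth_lags j : j < sumn ts -> nth 0 (lags (indicator e f)) j = count_below f (elt e j).
  by move=> lt_j; rewrite lags_indicator (nth_map 0) // size_svals card_e.
split=> [eq_w j lt_j | count_e].
  by rewrite -nth_lags // eq_w; exact: (nth_lags_block_word size_os lt_j).
apply: lags_inj; last by rewrite count_negb_indicator count_block_word //= mul1n.
apply: (@eq_from_nth _ 0) => [|j].
  by rewrite !size_lags count_block_word //= count_indicator card_e mul1n.
rewrite size_lags count_indicator card_e => lt_j.
by rewrite nth_lags // count_e // nth_lags_block_word.
Qed.

End Disjoint.

Lemma pattern_of_indicator e f : [disjoint e & f] ->
  0 < count_below e (elt f 0) -> pattern_of e f = indicator e f.
Proof.
move=> ef_disj e_first; rewrite pattern_ofE; case: ifP => // head_f; exfalso.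
have : nth 0 (lags (indicator f e)) 0 = 0.
  rewrite /indicator setUC; case s_def: (svals (e :|: f)) head_f => [//|a s] /= a_e.
  have : a \in svals (e :|: f) by rewrite s_def mem_head.
  rewrite mem_svals => /mapP [x]; rewrite mem_enum in_setU => /orP[] x_ef a_def.
    by move: a_e; rewrite a_def mem_vals x_ef.
  by rewrite a_def mem_vals x_ef.
rewrite lags_indicator 1?disjoint_sym //; move: e_first; rewrite /elt.
case: (svals f) => [|b s] /=; last by move=> + eq0; rewrite eq0.
by rewrite /count_below big1 // => x _; rewrite ltn0.
Qed.

Lemma pattern_of_sym e f : [disjoint e & f] -> pattern_of e f = pattern_of f e.
Proof.
move=> ef_disj; rewrite !pattern_ofE [f :|: e]setUC.
case s_def: (svals (e :|: f)) => [|a s] /=.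
  by rewrite /indicator [f :|: e]setUC s_def /= !if_same.
have : a \in svals (e :|: f) by rewrite s_def mem_head.
rewrite mem_svals => /mapP [x]; rewrite mem_enum in_setU => x_ef ->.
rewrite !mem_vals; case/orP: x_ef => [xe|xf].
  by rewrite xe (disjointFr ef_disj xe).
by rewrite xf (disjointFl ef_disj xf).
Qed.

End OrdinalSets.

Section Composition.
Variable ts : seq nat.
Hypothesis ts_pos : all (fun t => 0 < t) ts.

Lemma nth_parts_gt0 i : i < size ts -> 0 < nth 0 ts i.
Proof. by move=> lt_i; apply: (allP ts_pos); exact: mem_nth. Qed.

Lemma psum_lt_sumn i : i < size ts -> psum ts i < sumn ts.
Proof.
move=> lt_i; have := psumS lt_i; have := psum_le_sumn ts i.+1.
have := nth_parts_gt0 lt_i; lia.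
Qed.

Lemma block_of_psum i : i < size ts -> block_of ts (psum ts i) = i.
Proof. by move=> lt_i; rewrite -[psum ts i]addn0 block_of_psumD ?nth_parts_gt0. Qed.

Variable n : nat.
Implicit Types (e f : {set 'I_n}) (os : seq bool).

Definition precedes f e i := elt f (psum ts i) < elt e (psum ts i).

Section Pair.
Variables e f : {set 'I_n}.
Hypothesis ef_disj : [disjoint e & f].
Hypotheses (card_e : #|e| = sumn ts) (card_f : #|f| = sumn ts).

Lemma precedes_indicator os i : size ts = size os ->
  indicator e f = block_word ts os -> i < size ts ->
  precedes f e i = ~~ nth true os i.
Proof.
move=> size_os /(indicator_block_wordP ef_disj size_os card_e card_f) count_e lt_i.
rewrite /precedes elt_ltE ?card_f ?psum_lt_sumn // count_e ?psum_lt_sumn //=.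
rewrite block_of_psum //; have := nth_parts_gt0 lt_i.
by case: (nth true os i) => /=; lia.
Qed.

Lemma count_below_precedes os j : size ts = size os ->
  indicator e f = block_word ts os -> j < sumn ts ->
  let i := block_of ts j in
  count_below f (elt e j) = psum ts i + precedes f e i * nth 0 ts i.
Proof.
move=> size_os eq_w lt_j.
rewrite (indicator_block_wordP ef_disj size_os card_e card_f).1 //=.
by rewrite (precedes_indicator size_os eq_w) // block_of_lt_size.
Qed.

Lemma pattern_of_block_word os : pattern_of e f = block_word ts os ->
  exists2 os', indicator e f = block_word ts os' & os' = os \/ os' = map negb os.
Proof.
rewrite pattern_ofE; case: ifP => _ eq_w; first by exists os; [|left].
exists (map negb os); last by right.
by rewrite -map_negb_block_word -eq_w indicator_sym 1?disjoint_sym // (mapK negbK).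
Qed.

Lemma precedes_pattern os i : size ts = size os ->
  pattern_of e f = block_word ts os -> nth true os 0 ->
  i < size ts -> precedes f e i = (precedes f e 0 == nth true os i).
Proof.
move=> size_os /pattern_of_block_word [os' eq_w os'_def] os0 lt_i.
have lt_0 : 0 < size ts by case: (size ts) lt_i.
have size_os' : size ts = size os' by case: os'_def => ->; rewrite ?size_map.
rewrite !(precedes_indicator size_os' eq_w) //; case: os'_def => ->; rewrite ?(nth_map true);
  by rewrite -?size_os // os0; case: (nth true os i).
Qed.

End Pair.
End Composition.

(** * Edges with prescribed ranks *)

Section KeyedEdges.
Variables (r k : nat) (ts : seq nat).
Hypothesis ts_pos : all (fun t => 0 < t) ts.
Hypothesis sumn_ts : sumn ts = r.
Local Notation n := (r * k).
Local Notation b j := (block_of ts j).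
Local Notation start j := (psum ts (block_of ts j)).
Local Notation len j := (nth 0 ts (block_of ts j)).

(* Block i of every edge lies in the window [k * psum ts i, k * psum ts i.+1); an
   edge with key c places its t_i points of block i consecutively from
   k * psum ts i + t_i * c i on. *)
Definition keyed_elt (key : nat -> nat) j := k * start j + len j * key (b j) + (j - start j).

Definition bounded_key (key : nat -> nat) := forall i, i < size ts -> key i < k.

Lemma block_of_lt j : j < r -> b j < size ts.
Proof. by rewrite -sumn_ts; exact: block_of_lt_size. Qed.

Lemma lt_start_len j : j < r -> j < start j + len j.
Proof. by move=> lt_j; rewrite -psumS ?block_of_lt // lt_psum_block_ofS ?sumn_ts. Qed.

Lemma keyed_elt_ge key j : k * start j <= keyed_elt key j.
Proof. by rewrite /keyed_elt -addnA leq_addr. Qed.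

Lemma keyed_elt_lt key j : bounded_key key -> j < r ->
  keyed_elt key j < k * psum ts (b j).+1.
Proof.
move=> key_lt lt_j; rewrite psumS ?block_of_lt // mulnDr /keyed_elt.
have : len j * (key (b j)).+1 <= len j * k by rewrite leq_mul2l key_lt ?block_of_lt ?orbT.
have := lt_start_len lt_j; have := psum_block_of_le ts j.
by rewrite mulnS (mulnC k (len j)); lia.
Qed.

Lemma keyed_elt_lt_n key j : bounded_key key -> j < r -> keyed_elt key j < n.
Proof.
move=> key_lt lt_j; apply: leq_trans (keyed_elt_lt key_lt lt_j) _.
by rewrite mulnC leq_mul2r -sumn_ts psum_le_sumn orbT.
Qed.

Lemma keyed_elt_lt_block key1 key2 j j' : bounded_key key2 -> j' < r -> b j' < b j ->
  keyed_elt key2 j' < keyed_elt key1 j.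
Proof.
move=> key2_lt lt_j' lt_b; apply: leq_trans (keyed_elt_lt key2_lt lt_j') _.
by apply: leq_trans (keyed_elt_ge _ _); rewrite leq_mul2l leq_psum ?orbT.
Qed.

Lemma ltn_keyed_elt key1 key2 j j' : bounded_key key1 -> bounded_key key2 ->
  (forall i, i < size ts -> key1 i != key2 i) -> j < r -> j' < r ->
  (keyed_elt key2 j' < keyed_elt key1 j) =
    (b j' < b j) || (b j' == b j) && (key2 (b j) < key1 (b j)).
Proof.
move=> key1_lt key2_lt neq_key lt_j lt_j'.
case: (ltngtP (b j') (b j)) => [lt_b|lt_b|eq_b] /=.
- exact: keyed_elt_lt_block.
- by apply/negbTE; rewrite -leqNgt ltnW // keyed_elt_lt_block.
rewrite /keyed_elt eq_b -!addnA ltn_add2l ltn_muladd 1?eq_sym ?neq_key ?block_of_lt //.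
  by have := lt_start_len lt_j'; have := psum_block_of_le ts j'; rewrite eq_b; lia.
by have := lt_start_len lt_j; have := psum_block_of_le ts j; lia.
Qed.

Lemma keyed_elt_increasing key j j' : bounded_key key -> j' < r -> j < j' ->
  keyed_elt key j < keyed_elt key j'.
Proof.
move=> key_lt lt_j' lt_jj'; have lt_j : j < r by lia.
case: (ltngtP (b j) (b j')) => [lt_b|lt_b|eq_b].
- exact: keyed_elt_lt_block.
- have := psum_block_of_le ts j; have := lt_psum_block_ofS (ts := ts) (j := j').
  by rewrite sumn_ts => /(_ lt_j'); have := leq_psum ts lt_b; lia.
- by have := psum_block_of_le ts j; rewrite /keyed_elt eq_b; lia.
Qed.

Definition keyed_edge key : {set 'I_n} :=
  [set x | val x \in [seq keyed_elt key j | j <- iota 0 r]].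

Section Bounded.
Variable key : nat -> nat.
Hypothesis key_lt : bounded_key key.

Lemma svals_keyed_edge : svals (keyed_edge key) = [seq keyed_elt key j | j <- iota 0 r].
Proof.
apply: (irr_sorted_eq ltn_trans ltnn); first exact: svals_sorted.
  apply: (homo_sorted_in (P := fun j => j < r)) (iota_ltn_sorted 0 r).
  - by move=> j j' _ lt_j'; apply: keyed_elt_increasing.
  - by apply/allP => j; rewrite mem_iota.
move=> a; rewrite mem_svals; apply/mapP/idP => [[x]|a_in].
  by rewrite mem_enum inE => ? ->.
have lt_an : a < n.
  by case/mapP: a_in => j; rewrite mem_iota => /andP[_ lt_j] ->; exact: keyed_elt_lt_n.
by exists (Ordinal lt_an); rewrite // mem_enum inE.
Qed.

Lemma card_keyed_edge : #|keyed_edge key| = r.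
Proof. by rewrite -size_svals svals_keyed_edge size_map size_iota. Qed.

Lemma elt_keyed_edge j : j < r -> elt (keyed_edge key) j = keyed_elt key j.
Proof. by move=> lt_j; rewrite /elt svals_keyed_edge (nth_map 0) ?size_iota ?nth_iota. Qed.

End Bounded.

Lemma count_below_keyed_edge key1 key2 j : bounded_key key1 -> bounded_key key2 ->
  (forall i, i < size ts -> key1 i != key2 i) -> j < r ->
  count_below (keyed_edge key2) (keyed_elt key1 j) =
    start j + (key2 (b j) < key1 (b j)) * len j.
Proof.
move=> key1_lt key2_lt neq_key lt_j; rewrite count_belowE svals_keyed_edge // count_map.
have lt_b := block_of_lt lt_j.
pose bound := if key2 (b j) < key1 (b j) then psum ts (b j).+1 else start j.
rewrite (eq_in_count (a2 := fun j' => j' < bound)) => [|j']; last first.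
  rewrite mem_iota add0n => /= lt_j'; rewrite ltn_keyed_elt // /bound.
  have lt_j's : j' < sumn ts by rewrite sumn_ts.
  case: ifP => _; rewrite ?andbT ?andbF ?orbF.
    by rewrite -(block_of_ltE (i := (b j).+1) lt_j's) // ltnS [in RHS]leq_eqVlt orbC.
  by rewrite -(block_of_ltE (i := b j) lt_j's) // ltnW.
rewrite count_lt_iota /bound; last by case: ifP; rewrite -sumn_ts psum_le_sumn.
by case: ifP; rewrite ?psumS //= ?mul1n ?mul0n ?addn0.
Qed.

Lemma keyed_edges_disjoint key1 key2 : bounded_key key1 -> bounded_key key2 ->
  (forall i, i < size ts -> key1 i != key2 i) ->
  [disjoint keyed_edge key1 & keyed_edge key2].
Proof.
move=> key1_lt key2_lt neq_key; rewrite -setI_eq0; apply/eqP/setP => x; rewrite !inE.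
apply/negbTE/negP => /andP[/mapP [j] + eq_x /mapP [j'] +].
rewrite !mem_iota !add0n => /andP[_ lt_j] /andP[_ lt_j'] eq_x'.
have neq_key' i : i < size ts -> key2 i != key1 i by rewrite eq_sym; exact: neq_key.
have := ltn_keyed_elt key1_lt key2_lt neq_key lt_j lt_j'.
have := ltn_keyed_elt key2_lt key1_lt neq_key' lt_j' lt_j.
rewrite -eq_x -eq_x' ltnn; case: (ltngtP (b j') (b j)) => //= ->.
have := neq_key _ (block_of_lt lt_j).
by case: (ltngtP (key1 (b j)) (key2 (b j))).
Qed.

End KeyedEdges.

(** * Cliques and permutations *)

Section Matching.
Variables (r k : nat) (M : {set {set 'I_(r * k)}}).
Hypothesis M_matching : is_matching M.

Lemma card_matching : #|M| = k.
Proof. by case/and3P: M_matching => _ _ /eqP. Qed.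

Lemma card_edge e : e \in M -> #|e| = r.
Proof. by case/and3P: M_matching => /forall_inP card_M _ _ /card_M /eqP. Qed.

Lemma edges_disjoint e f : e \in M -> f \in M -> e != f -> [disjoint e & f].
Proof.
case/and3P: M_matching => _ /forall_inP disj_M _ eM fM.
by move: (disj_M e eM) => /forall_inP /(_ f fM) /implyP.
Qed.

Lemma card_edges_containing_le1 x : \sum_(f in M) (x \in f) <= 1.
Proof.
case: (pickP [pred f in M | x \in f]) => [f0 /andP[f0M xf0] | no_f]; last first.
  by rewrite big1 // => f fM; have := no_f f; rewrite /= fM /= => ->.
rewrite (big_setD1 f0 f0M) xf0 big1 // => f; rewrite in_setD1 => /andP[ff0 fM].
suff -> : (x \in f) = false by [].
by apply/negP => xf; rewrite (disjointFr (edges_disjoint fM f0M ff0) xf) in xf0.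
Qed.

(* k disjoint edges of size r cover all r * k points. *)
Lemma card_edges_containing x : \sum_(f in M) (x \in f) = 1.
Proof.
pose deg y := \sum_(f in M) (y \in f).
have sum_deg : \sum_(y : 'I_(r * k)) deg y = r * k.
  rewrite /deg exchange_big /= (eq_bigr (fun=> r)) => [|f fM].
    by rewrite sum_nat_const card_matching mulnC.
  by rewrite -big_mkcond sum1_card card_edge.
have : \sum_(y : 'I_(r * k)) (1 - deg y) = 0.
  suff : \sum_(y : 'I_(r * k)) deg y + \sum_(y : 'I_(r * k)) (1 - deg y) = r * k.
    by rewrite sum_deg; lia.
  rewrite -big_split /= (eq_bigr (fun=> 1)) ?sum1_card ?card_ord // => y _.
  by have := card_edges_containing_le1 y; rewrite /deg; lia.
move/eqP; rewrite sum_nat_eq0 => /forallP /(_ x) /= /eqP.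
have := card_edges_containing_le1 x; rewrite /deg => le1 /eqP.
by rewrite subn_eq0 => ge1; apply/eqP; rewrite eqn_leq le1.
Qed.

Lemma sum_count_below a : a <= r * k -> \sum_(f in M) count_below f a = a.
Proof.
move=> le_a; rewrite -[RHS](count_below_setT le_a) /count_below.
transitivity (\sum_(f in M) \sum_(x : 'I_(r * k)) ((x \in f) * (val x < a))).
  apply: eq_bigr => f _; rewrite big_mkcond; apply: eq_bigr => x _.
  by case: (x \in f); rewrite ?mul1n ?mul0n.
rewrite exchange_big /= [RHS](eq_bigl predT) => [|x]; last by rewrite inE.
by apply: eq_bigr => x _; rewrite -big_distrl /= card_edges_containing mul1n.
Qed.

End Matching.

Definition flip (k : nat) (b : bool) (m : nat) := if b then m else k.-1 - m.

Lemma flip_lt k b m : m < k -> flip k b m < k.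
Proof. by case: b => /=; lia. Qed.

Lemma flipK k b m m' : m < k -> m' < k -> flip k b m = flip k b m' -> m = m'.
Proof. by case: b => /=; lia. Qed.

Lemma flip_flip k b c m : m < k -> flip k b (flip k c m) = flip k (b == c) m.
Proof. by case: b; case: c => /=; lia. Qed.

Section Harmonious.
Variables (r k : nat) (ts : seq nat) (oP oQ : seq bool) (d : nat).
Hypothesis ts_pos : all (fun t => 0 < t) ts.
Hypothesis sumn_ts : sumn ts = r.
Hypotheses (size_oP : size ts = size oP) (size_oQ : size ts = size oQ).
Hypotheses (oP0 : nth true oP 0) (oQ0 : nth true oQ 0).
Hypotheses (lt_d : d < size ts) (oPQ_d : nth true oP d != nth true oQ d).

Local Notation n := (r * k).
Local Notation agree i := (nth true oP i == nth true oQ i).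

(* The rank of the m-th edge in block i: m where P and Q orient block i alike, s m
   where they differ, reversed when block i of P is B^t A^t. *)
Definition perm_key (s : {perm 'I_k}) (m : 'I_k) (i : nat) : nat :=
  flip k (nth true oP i) (if agree i then m else s m).

Definition clique_of_perm s : {set {set 'I_n}} :=
  [set keyed_edge r k ts (perm_key s m) | m : 'I_k].

Lemma size_ts_gt0 : 0 < size ts. Proof. by case: (size ts) lt_d. Qed.

Lemma r_gt0 : 0 < r.
Proof. by rewrite -sumn_ts (leq_trans _ (psum_lt_sumn ts_pos size_ts_gt0)). Qed.

Lemma perm_key0 s m : perm_key s m 0 = m.
Proof. by rewrite /perm_key oP0; move: oQ0; rewrite -(negbK (nth _ oQ 0)) => /negbTE ->. Qed.

Section FixedPerm.
Variable s : {perm 'I_k}.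
Implicit Types m : 'I_k.
Local Notation edge m := (keyed_edge r k ts (perm_key s m)).

Lemma bounded_perm_key m : bounded_key k ts (perm_key s m).
Proof. by move=> i _; apply: flip_lt; case: ifP. Qed.

Lemma card_perm_edge m : #|edge m| = r.
Proof. exact: (card_keyed_edge ts_pos sumn_ts (bounded_perm_key m)). Qed.

Lemma elt_perm_edge m j : j < r -> elt (edge m) j = keyed_elt k ts (perm_key s m) j.
Proof. exact: (elt_keyed_edge ts_pos sumn_ts (bounded_perm_key m)). Qed.

Lemma perm_key_neq m m' : m != m' -> forall i, perm_key s m i != perm_key s m' i.
Proof.
move=> neq_m i; apply/eqP => /flipK; rewrite /perm_key.
case: ifP => _ /(_ (ltn_ord _) (ltn_ord _)) /val_inj; last move/perm_inj.
all: by move/eqP; rewrite (negbTE neq_m).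
Qed.

Lemma ltn_perm_key m m' i : m < m' ->
  (perm_key s m' i < perm_key s m i) = ~~ nth true (if s m < s m' then oP else oQ) i.
Proof.
move=> lt_m; have lt_m' := ltn_ord m'; have lt_sm := ltn_ord (s m).
have lt_sm' := ltn_ord (s m'); rewrite /perm_key /flip.
have neq_s : s m != s m' by rewrite (inj_eq perm_inj) neq_ltn lt_m.
case: (ltngtP (s m) (s m')) => [lt_s|lt_s|/val_inj eq_s]; last by rewrite eq_s eqxx in neq_s.
all: by case: (nth true oP i); case: (nth true oQ i) => /=; apply/idP/idP; lia.
Qed.

Lemma count_below_perm_edge m m' j : m != m' -> j < r -> let i := block_of ts j in
  count_below (edge m') (keyed_elt k ts (perm_key s m) j) =
    psum ts i + (perm_key s m' i < perm_key s m i) * nth 0 ts i.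
Proof.
move=> neq_m; apply: (count_below_keyed_edge ts_pos sumn_ts (bounded_perm_key m)).
  exact: bounded_perm_key.
by move=> i _; apply: perm_key_neq.
Qed.

Lemma perm_edges_disjoint m m' : m != m' -> [disjoint edge m & edge m'].
Proof.
move=> neq_m; apply: (keyed_edges_disjoint ts_pos sumn_ts (bounded_perm_key m)).
  exact: bounded_perm_key.
by move=> i _; apply: perm_key_neq.
Qed.

Lemma perm_edge_inj : injective (fun m => edge m).
Proof.
move=> m m' eq_edge; apply/eqP; apply: contraT => /perm_edges_disjoint.
rewrite eq_edge -setI_eq0 setIid -cards_eq0.
by rewrite card_perm_edge eqn0Ngt r_gt0.
Qed.

Lemma clique_of_perm_matching : is_matching (clique_of_perm s).
Proof.
apply/and3P; split.
- apply/forall_inP => e /imsetP [m _ ->].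
  by rewrite card_perm_edge.
- apply/forall_inP => e /imsetP [m _ ->]; apply/forall_inP => f /imsetP [m' _ ->].
  apply/implyP => neq_edge; apply: perm_edges_disjoint.
  by apply: contraNneq neq_edge => ->.
- by rewrite card_imset ?card_ord //; exact: perm_edge_inj.
Qed.

Lemma pattern_of_perm_edges m m' : m < m' ->
  pattern_of (edge m) (edge m') = block_word ts (if s m < s m' then oP else oQ).
Proof.
move=> lt_m; have neq_m : m != m' by rewrite neq_ltn lt_m.
have size_o : size ts = size (if s m < s m' then oP else oQ) by case: ifP.
have card_edge m'' : #|edge m''| = sumn ts by rewrite card_perm_edge.
rewrite pattern_of_indicator ?perm_edges_disjoint //.
  apply/(indicator_block_wordP (perm_edges_disjoint neq_m) size_o) => // j.
  rewrite sumn_ts => lt_j /=.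
  by rewrite elt_perm_edge // count_below_perm_edge // ltn_perm_key.
have block0 : block_of ts 0 = 0 by have := block_of_psum ts_pos size_ts_gt0; rewrite psum0.
rewrite elt_perm_edge ?r_gt0 // count_below_perm_edge ?r_gt0 1?eq_sym //=.
by rewrite block0 psum0 !perm_key0 lt_m mul1n nth_parts_gt0 ?size_ts_gt0.
Qed.

Lemma clique_of_perm_clique :
  is_clique2 (block_word ts oP) (block_word ts oQ) (clique_of_perm s).
Proof.
apply/forall_inP => e /imsetP [m _ ->]; apply/forall_inP => f /imsetP [m' _ ->].
apply/implyP => neq_edge; have neq_m : m != m' by apply: contraNneq neq_edge => ->.
have pat_in m1 m2 : m1 < m2 -> pattern_of (edge m1) (edge m2) \in
    [:: block_word ts oP; block_word ts oQ].
  by move/pattern_of_perm_edges ->; case: ifP; rewrite !inE eqxx ?orbT.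
case: (ltngtP m m') => [|lt_m'|/val_inj eq_m]; [exact: pat_in| |by rewrite eq_m eqxx in neq_m].
by rewrite pattern_of_sym ?pat_in // perm_edges_disjoint.
Qed.

End FixedPerm.

Lemma clique_of_perm_inj : injective clique_of_perm.
Proof.
move=> s s' eq_cliques; apply/permP => m.
have : keyed_edge r k ts (perm_key s m) \in clique_of_perm s' by rewrite -eq_cliques imset_f.
case/imsetP => m' _ eq_edge.
have elt_eq j : j < r -> keyed_elt k ts (perm_key s m) j = keyed_elt k ts (perm_key s' m') j.
  by move=> lt_j; rewrite -!elt_perm_edge // eq_edge.
have elt_psum s'' m'' i : i < size ts ->
    keyed_elt k ts (perm_key s'' m'') (psum ts i) =
    k * psum ts i + nth 0 ts i * perm_key s'' m'' i.
  by move=> lt_i; rewrite /keyed_elt block_of_psum // subnn addn0.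
have psum_lt i : i < size ts -> psum ts i < r by rewrite -sumn_ts; exact: psum_lt_sumn.
have eq_key i : i < size ts -> perm_key s m i = perm_key s' m' i.
  move=> lt_i; have := elt_eq _ (psum_lt _ lt_i); rewrite !elt_psum // => /addnI /eqP.
  by rewrite eqn_mul2l eqn0Ngt nth_parts_gt0 // => /eqP.
have eq_m : m = m'.
  by apply/val_inj; rewrite /= -(perm_key0 s m) -(perm_key0 s' m') eq_key ?size_ts_gt0.
move: (eq_key d lt_d); rewrite /perm_key -eq_m (negbTE oPQ_d) => /flipK.
by move=> /(_ (ltn_ord _) (ltn_ord _)) /val_inj.
Qed.

Section Clique.
Variable M : {set {set 'I_n}}.
Hypothesis M_matching : is_matching M.
Hypothesis M_clique : is_clique2 (block_word ts oP) (block_word ts oQ) M.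

Definition rank i e := \sum_(f in M :\ e) precedes ts f e i.

Section TwoEdges.
Variables e f : {set 'I_n}.
Hypotheses (eM : e \in M) (fM : f \in M) (fe : f != e).

Let ef_disj : [disjoint e & f].
Proof. by apply: (edges_disjoint M_matching eM fM); rewrite eq_sym. Qed.
Let card_e : #|e| = sumn ts. Proof. by rewrite sumn_ts (card_edge M_matching). Qed.
Let card_f : #|f| = sumn ts. Proof. by rewrite sumn_ts (card_edge M_matching). Qed.

Lemma pattern_of_edges :
  exists2 os, os = oP \/ os = oQ & pattern_of e f = block_word ts os.
Proof.
move/forall_inP: M_clique => /(_ e eM) /forall_inP /(_ f fM) /implyP.
rewrite eq_sym => /(_ fe); rewrite !inE => /orP[] /eqP eq_pat.
  by exists oP; [left|].
by exists oQ; [right|].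
Qed.

Lemma count_below_edge j : j < r -> let i := block_of ts j in
  count_below f (elt e j) = psum ts i + precedes ts f e i * nth 0 ts i.
Proof.
move=> lt_j; have [os os_def /pattern_of_block_word] := pattern_of_edges.
case/(_ ef_disj) => os' eq_w os'_def.
have size_os' : size ts = size os'.
  by case: os'_def => ->; case: os_def => ->; rewrite ?size_map.
by apply: (count_below_precedes ts_pos ef_disj card_e card_f size_os' eq_w); rewrite sumn_ts.
Qed.

Lemma precedes_edges : exists2 os, os = oP \/ os = oQ &
  forall i, i < size ts -> precedes ts f e i = (precedes ts f e 0 == nth true os i).
Proof.
have [os os_def eq_pat] := pattern_of_edges; exists os => [//|i lt_i].
have [size_os os0] : size ts = size os /\ nth true os 0 by case: os_def => ->.
exact (precedes_pattern ts_pos ef_disj card_e card_f size_os eq_pat os0 lt_i).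
Qed.

End TwoEdges.

Lemma card_other_edges e : e \in M -> #|M :\ e| = k.-1.
Proof. by move=> eM; have := cardsD1 e M; rewrite eM (card_matching M_matching); lia. Qed.

(* Counting the points below the j-th point of e edge by edge. *)
Lemma elt_edge e j : e \in M -> j < r -> elt e j = keyed_elt k ts (rank^~ e) j.
Proof.
move=> eM lt_j; have card_e := card_edge M_matching eM.
have le_elt := ltnW (elt_lt_n (leq_trans lt_j (eq_leq (esym card_e)))).
rewrite -{1}(sum_count_below M_matching le_elt) (big_setD1 e eM) count_below_elt ?card_e //=.
pose i := block_of ts j.
rewrite (eq_bigr (fun f => psum ts i + precedes ts f e i * nth 0 ts i)) => [|f]; last first.
  by rewrite in_setD1 => /andP[fe fM]; exact: count_below_edge.
rewrite big_split /= sum_nat_const card_other_edges // -big_distrl /= /keyed_elt -/(rank _ e).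
have k_gt0 : 0 < k by rewrite -(card_matching M_matching) (cardD1 e) eM.
have := psum_block_of_le ts j; rewrite /i (mulnC (nth 0 ts _)).
have -> : k = k.-1.+1 by lia.
by rewrite mulSn; lia.
Qed.

Lemma rank_lt i e : e \in M -> rank i e < k.
Proof.
move=> eM; have := card_matching M_matching; rewrite (cardD1 e) eM /= => card_M.
suff : rank i e <= #|M :\ e| by rewrite card_other_edges //; lia.
by rewrite -sum1_card; apply: leq_sum => f _; case: precedes.
Qed.

Lemma rank_flip e i i' c : e \in M ->
  (forall f, f \in M :\ e -> precedes ts f e i = (precedes ts f e i' == c)) ->
  rank i e = flip k c (rank i' e).
Proof.
move=> eM prec_f.
have -> : rank i e = \sum_(f in M :\ e) (precedes ts f e i' == c).
  by apply: eq_bigr => f /prec_f ->.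
have card_split : \sum_(f in M :\ e) (precedes ts f e i' == false) + rank i' e = k.-1.
  rewrite -(card_other_edges eM) -sum1_card -big_split /=.
  by apply: eq_bigr => f _; case: precedes.
case: c {prec_f} card_split => /= [_|]; last by lia.
by apply: eq_bigr => f _; case: precedes.
Qed.

Lemma rank_agree e i : e \in M -> i < size ts -> nth true oP i = nth true oQ i ->
  rank i e = flip k (nth true oP i) (rank 0 e).
Proof.
move=> eM lt_i oPQ_i; apply: rank_flip => // f; rewrite in_setD1 => /andP[fe fM].
have [os os_def prec_f] := precedes_edges eM fM fe.
by rewrite prec_f //; case: os_def => ->; rewrite ?oPQ_i.
Qed.

Lemma rank_disagree e i : e \in M -> i < size ts -> nth true oP i != nth true oQ i ->
  rank i e = flip k (nth true oP i == nth true oP d) (rank d e).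
Proof.
move=> eM lt_i oPQ_i; apply: rank_flip => // f; rewrite in_setD1 => /andP[fe fM].
have [os os_def prec_f] := precedes_edges eM fM fe.
rewrite (prec_f i lt_i) (prec_f d lt_d); move: oPQ_i oPQ_d.
by case: os_def => ->; case: (nth true oP i); case: (nth true oQ i);
  case: (nth true oP d); case: (nth true oQ d); case: (precedes ts f e 0).
Qed.

Lemma elt_edge_psum e i : e \in M -> i < size ts ->
  elt e (psum ts i) = k * psum ts i + nth 0 ts i * rank i e.
Proof.
move=> eM lt_i; have lt_psum : psum ts i < r by rewrite -sumn_ts psum_lt_sumn.
by rewrite elt_edge // /keyed_elt block_of_psum // subnn addn0.
Qed.

Lemma rank_inj i : i < size ts -> {in M &, injective (rank i)}.
Proof.
move=> lt_i e f eM fM eq_rank; apply/eqP; apply: contraT => ef.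
have lt_psum : psum ts i < r by rewrite -sumn_ts psum_lt_sumn.
have [x xe eq_x] := elt_mem (E := e) (j := psum ts i) ltac:(by rewrite (card_edge M_matching)).
have [y yf eq_y] := elt_mem (E := f) (j := psum ts i) ltac:(by rewrite (card_edge M_matching)).
have eq_xy : x = y by apply: val_inj; rewrite eq_x eq_y !elt_edge_psum // eq_rank.
by have := disjointFr (edges_disjoint M_matching eM fM ef) xe; rewrite eq_xy yf.
Qed.

Lemma rank0_surj m : m < k -> exists2 e, e \in M & rank 0 e = m.
Proof.
move=> lt_m; have uniq_ranks : uniq [seq rank 0 e | e <- enum M].
  rewrite map_inj_in_uniq ?enum_uniq // => e f; rewrite !mem_enum => eM fM.
  exact: (rank_inj size_ts_gt0 eM fM).
have sub_ranks : {subset [seq rank 0 e | e <- enum M] <= iota 0 k}.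
  by move=> x /mapP [e]; rewrite mem_enum => eM ->; rewrite mem_iota rank_lt.
have [|_ /(_ m)] := uniq_min_size uniq_ranks sub_ranks.
  by rewrite size_iota size_map -cardE (card_matching M_matching).
by rewrite mem_iota lt_m => /mapP [e]; rewrite mem_enum => eM ->; exists e.
Qed.

Definition edge_of_rank m := odflt set0 [pick e in M | rank 0 e == m].

Lemma edge_of_rankP (m : 'I_k) : edge_of_rank m \in M /\ rank 0 (edge_of_rank m) = m.
Proof.
rewrite /edge_of_rank; case: pickP => [e /andP[eM /eqP] //|no_e].
have [e eM e_m] := rank0_surj (ltn_ord m).
by have := no_e e; rewrite /= eM e_m eqxx.
Qed.

Definition perm_of_clique_fun (m : 'I_k) : 'I_k :=
  Ordinal (flip_lt (nth true oP d) (rank_lt d (edge_of_rankP m).1)).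

Lemma perm_of_clique_fun_inj : injective perm_of_clique_fun.
Proof.
move=> m m' /(congr1 val) /= /flipK eq_rank; have [eM e_m] := edge_of_rankP m.
have [eM' e_m'] := edge_of_rankP m'.
apply/val_inj; rewrite /= -e_m -e_m'; congr (rank 0 _).
exact: (rank_inj lt_d eM eM' (eq_rank (rank_lt d eM) (rank_lt d eM'))).
Qed.

Definition perm_of_clique : {perm 'I_k} := perm perm_of_clique_fun_inj.

Lemma rank_edge_of_rank (m : 'I_k) i : i < size ts ->
  rank i (edge_of_rank m) = perm_key perm_of_clique m i.
Proof.
move=> lt_i; have [eM e_m] := edge_of_rankP m; rewrite /perm_key permE /=.
case: ifP => [/eqP|/negbT] oPQ_i.
  by rewrite (rank_agree eM lt_i oPQ_i) e_m.
rewrite (rank_disagree eM lt_i oPQ_i).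
by rewrite flip_flip ?rank_lt.
Qed.

Lemma edge_of_rankE (m : 'I_k) :
  edge_of_rank m = keyed_edge r k ts (perm_key perm_of_clique m).
Proof.
have [eM _] := edge_of_rankP m; have card_e := card_edge M_matching eM.
apply: svals_inj; apply: (@eq_from_nth _ 0) => [|j].
  by rewrite !size_svals card_e card_perm_edge.
rewrite size_svals card_e => lt_j; rewrite -[nth _ _ _]/(elt _ j) -[RHS]/(elt _ j).
rewrite elt_perm_edge // (elt_edge eM lt_j) /keyed_elt.
by rewrite rank_edge_of_rank // (block_of_lt sumn_ts lt_j).
Qed.

Lemma clique_of_permK : clique_of_perm perm_of_clique = M.
Proof.
apply/eqP; rewrite eqEcard (card_matching M_matching).
rewrite card_imset ?card_ord ?leqnn ?andbT; last exact: perm_edge_inj.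
by apply/subsetP => _ /imsetP [m _ ->]; rewrite -edge_of_rankE; case: (edge_of_rankP m).
Qed.

End Clique.

Lemma card_block_word_cliques :
  #|[set M : {set {set 'I_n}} | is_matching M &&
     is_clique2 (block_word ts oP) (block_word ts oQ) M]| = k`!.
Proof.
have -> : [set M : {set {set 'I_n}} | is_matching M &&
    is_clique2 (block_word ts oP) (block_word ts oQ) M] =
    [set clique_of_perm s | s : {perm 'I_k}].
  apply/setP => M; rewrite inE; apply/andP/imsetP => [[M_matching M_clique]|[s _ ->]].
    by exists (perm_of_clique M_matching M_clique); rewrite ?clique_of_permK.
  by split; [exact: clique_of_perm_matching | exact: clique_of_perm_clique].
by rewrite card_imset ?card_Sn //; exact: clique_of_perm_inj.
Qed.

End Harmonious.

Lemma is_blockE b : is_block b -> 0 < (size b)./2 /\ exists o, b = block (size b)./2 o.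
Proof.
case=> t t_gt0 b_def; have -> : (size b)./2 = t.
  by case: b_def => ->; rewrite size_cat !size_nseq addnn half_double.
by split=> //; case: b_def => ->; [exists true | exists false].
Qed.

Lemma splitting_block_word w bs : is_splitting w bs ->
  [/\ all (fun t => 0 < t) (composition_of bs) &
      exists2 os, size (composition_of bs) = size os & w = block_word (composition_of bs) os].
Proof.
case=> blocks <-; elim: bs blocks => [|b bs IH] blocks; first by split=> //; exists [::].
have [b' b'_in|bs_pos [os size_os eq_w]] := IH; first by apply: blocks; rewrite inE b'_in orbT.
have [b_gt0 [o b_def]] := is_blockE (blocks b (mem_head _ _)).
split; first by rewrite /= b_gt0.
by exists (o :: os); rewrite /= ?size_os // -eq_w {1}b_def.
Qed.

Lemma is_pattern_block_word r ts os : all (fun t => 0 < t) ts -> size ts = size os ->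
  is_pattern r (block_word ts os) -> sumn ts = r /\ nth true os 0.
Proof.
move=> ts_pos size_os /and3P[_ /eqP <- head_w].
split; first by rewrite count_block_word //= mul1n.
move: ts_pos size_os head_w; case: ts => [|t ts] /=; first by case: os.
by case/andP=> t_gt0 _; case: os => [|[] os] //= _; rewrite /block; case: t t_gt0.
Qed.

Lemma block_words_disagree ts oP oQ : size ts = size oP -> size ts = size oQ ->
  block_word ts oP <> block_word ts oQ ->
  exists2 d, d < size ts & nth true oP d != nth true oQ d.
Proof.
move=> size_oP size_oQ neq_w.
have /hasP [d] : has (fun i => nth true oP i != nth true oQ i) (iota 0 (size ts)).
  apply/negPn/negP => /hasPn agree; apply: neq_w; congr block_word.
  apply: (@eq_from_nth _ true) => [|i]; first by rewrite -size_oP.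
  by rewrite -size_oP => lt_i; apply/eqP/negPn/agree; rewrite mem_iota.
by rewrite mem_iota => /andP[_ lt_d] ?; exists d.
Qed.

Theorem mainTheorem10 (r : nat) (P Q : seq bool) :
  2 <= r -> is_pattern r P -> is_pattern r Q -> harmonious P Q ->
  forall k : nat, 1 <= k ->
    #|[set M : {set {set 'I_(r * k)}} | is_matching M && is_clique2 P Q M]| = k`!.
Proof.
move=> _ P_pat Q_pat [neq_PQ [bsP [bsQ [split_P split_Q eq_comp]]]] k _.
have [ts_pos [oP size_oP P_def]] := splitting_block_word split_P.
have [_ [oQ size_oQ Q_def]] := splitting_block_word split_Q.
rewrite -{}eq_comp in size_oQ Q_def; subst P Q.
set ts := composition_of bsP in ts_pos size_oP size_oQ P_pat Q_pat neq_PQ *.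
have [sumn_ts oP0] := is_pattern_block_word ts_pos size_oP P_pat.
have [_ oQ0] := is_pattern_block_word ts_pos size_oQ Q_pat.
have [d lt_d oPQ_d] := block_words_disagree size_oP size_oQ neq_PQ.
exact: (card_block_word_cliques k ts_pos sumn_ts size_oP size_oQ oP0 oQ0 lt_d oPQ_d).
Qed.
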